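(* Let $(X,d_X)$ be a complete metric space. Let $\mathfrak{A}=\{A(t)\}_{t\in\mathbb{R}}$ be the pullback attractor of a process $U$ on $X$ and $\mathcal{A}$ the global attractor of a semigroup $S$ on $X$. Suppose that (i) for every family $\{x_t\}\subset X$ and $x_0\in X$ with $\lim_{t\to-\infty}d_X(x_t,x_0)=0$, $$\lim_{t\to-\infty} d_X\big(U(t,t-T,x_t),S(T,x_0)\big)=0\quad\text{for all } T>0;$$ (ii) $\mathfrak{A}$ is backwards compact, i.e. there is a compact set $K\subset X$ with $\bigcup_{t\leq 0}A(t)\subset K$. Then $\lim_{t\to-\infty}\operatorname{dist}\big(A(t),\mathcal{A}\big)=0$.
   Context: A process on $X$ is a map $U:\{(t,\tau)\in\mathbb{R}^2:t\geq\tau\}\times X\to X$ with $U(\tau,\tau,x)=x$ and $U(t,s,U(s,\tau,x))=U(t,\tau,x)$ for all $t\geq s\geq\tau$, $x\in X$ (no continuity is assumed). A pullback attractor of $U$ is a family $\mathfrak{A}=\{A(t)\}_{t\in\mathbb{R}}$ of nonempty compact subsets of $X$ which is invariant ($U(t,\tau,A(\tau))=A(t)$ for all $t\geq\tau$), pullback attracts every nonempty bounded set $D\subset X$ (i.e. $\lim_{s\to\infty}\operatorname{dist}(U(t,t-s,D),A(t))=0$ for every $t\in\mathbb{R}$), and is minimal among families with these properties. A semigroup on $X$ is a map $S:[0,\infty)\times X\to X$ with $S(0,x)=x$ and $S(t+s,x)=S(t,S(s,x))$; its global attractor $\mathcal{A}$ is a nonempty compact set with $S(t,\mathcal{A})=\mathcal{A}$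 for all $t\geq0$ that attracts every bounded set $D$: $\lim_{t\to\infty}\operatorname{dist}(S(t,D),\mathcal{A})=0$. Here $\operatorname{dist}(A,B)=\sup_{a\in A}\inf_{b\in B}d_X(a,b)$ is the Hausdorff semi-metric. *)

From HB Require Import structures.
From mathcomp Require Import all_boot all_order all_algebra.
From mathcomp Require Import all_classical all_reals all_analysis.
Set Implicit Arguments. Unset Strict Implicit. Unset Printing Implicit Defensive.
Import Order.TTheory GRing.Theory Num.Theory.
Local Open Scope classical_set_scope.
Local Open Scope ring_scope.

Section MetricDefs.
Variables (R : realType) (X : Type) (d : X -> X -> R).

Definition is_metric : Prop :=
  [/\ (forall x y, 0 <= d x y),
      (forall x y, d x y = 0 <-> x = y),
      (forall x y, d x y = d y x) &
      (forall x y z, d x z <= d x y + d y z)].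

Definition m_complete : Prop :=
  forall u : nat -> X,
    (forall e : R, 0 < e -> exists N : nat, forall m n : nat,
        (N <= m)%N -> (N <= n)%N -> d (u m) (u n) < e) ->
    exists x : X, forall e : R, 0 < e -> exists N : nat, forall n : nat,
        (N <= n)%N -> d (u n) x < e.

Definition m_open (O : set X) : Prop :=
  forall x, O x -> exists2 e : R, 0 < e & [set y | d x y < e] `<=` O.

Definition m_compact (K : set X) : Prop :=
  forall (I : Type) (F : I -> set X),
    (forall i, m_open (F i)) -> K `<=` \bigcup_i F i ->
    exists (n : nat) (g : nat -> I),
      K `<=` \bigcup_(j in [set k : nat | (k < n)%N]) F (g j).

Definition m_bounded (D : set X) : Prop :=
  exists x : X, exists r : R, forall y, D y -> d x y <= r.

Definition hdist (A B : set X) : \bar R :=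
  ereal_sup [set ereal_inf [set (d a b)%:E | b in B] | a in A].

(** Processes: U t tau x, meaningful for t >= tau. *)
Definition is_process (U : R -> R -> X -> X) : Prop :=
  (forall tau x, U tau tau x = x) /\
  (forall t s tau x, tau <= s -> s <= t -> U t s (U s tau x) = U t tau x).

Definition pullback_attracts (U : R -> R -> X -> X) (C : R -> set X) : Prop :=
  forall D : set X, D !=set0 -> m_bounded D ->
    forall t : R, hdist (U t (t - s) @` D) (C t) @[s --> +oo] --> 0%E.

Definition is_invariant_family (U : R -> R -> X -> X) (C : R -> set X) : Prop :=
  forall t tau, tau <= t -> U t tau @` C tau = C t.

Definition is_pullback_attractor (U : R -> R -> X -> X) (A : R -> set X) : Prop :=
  [/\ (forall t, A t !=set0 /\ m_compact (A t)),
      is_invariant_family U A,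
      pullback_attracts U A &
      (forall C : R -> set X,
         (forall t, C t !=set0 /\ m_compact (C t)) ->
         is_invariant_family U C -> pullback_attracts U C ->
         forall t, A t `<=` C t)].

Definition is_semigroup (S : R -> X -> X) : Prop :=
  (forall x, S 0 x = x) /\
  (forall t s x, 0 <= t -> 0 <= s -> S (t + s) x = S t (S s x)).

Definition is_global_attractor (S : R -> X -> X) (A : set X) : Prop :=
  [/\ A !=set0, m_compact A,
      (forall t, 0 <= t -> S t @` A = A) &
      (forall D : set X, D !=set0 -> m_bounded D ->
         hdist (S t @` D) A @[t --> +oo] --> 0%E)].

End MetricDefs.

From HB Require Import structures.
From mathcomp Require Import all_boot all_order all_algebra.
From mathcomp Require Import all_classical all_reals all_analysis.
Import Order.TTheory GRing.Theory Num.Theory.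
Local Open Scope classical_set_scope.
Local Open Scope ring_scope.

(* Fix e > 0. The global attractor attracts the compact set K, so
   dist(S(T) K, Aglob) < e/2 for some T > 0. Hypothesis (i), applied to a
   family running through a would-be counterexample sequence, gives every
   b in K a ball and a time below which U(t, t - T) maps that ball into the
   e/2-neighbourhood of S(T) b; finitely many balls cover K. By invariance,
   every point of A(t) is U(t, t - T) x with x in A(t - T), which lies in K
   once t <= 0, hence it is e-close to Aglob. *)

Lemma cvge0_le (R : realType) {T : Type} {F : set_system T} {FF : Filter F}
    (h : T -> \bar R) :
  (forall e, 0 < e -> \forall t \near F, (0 <= h t <= e%:E)%E) ->
  h t @[t --> F] --> 0%E.
Proof.
move=> h_small; apply/fine_cvgP; split.
  apply: filterS (h_small 1 ltr01) => t /andP[h0 h1].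
  by rewrite ge0_fin_numE // (le_lt_trans h1) ?ltry.
apply/cvgr0Pnorm_le => e e0; apply: filterS (h_small e e0) => t /=.
case: (h t) => [r| |] //=; last by rewrite leye_eq andbF.
by move=> /andP[r0 re]; rewrite ger0_norm -lee_fin.
Qed.

Section MetricSpace.
Context {R : realType} {X : Type} {d : X -> X -> R}.
Hypothesis dm : is_metric d.

Lemma m_open_ball (c : X) (r : R) : m_open d [set y | d c y < r].
Proof.
have [_ _ _ dtri] := dm.
move=> y /= cy; exists (r - d c y); first by rewrite subr_gt0.
by move=> z /= yz; apply: le_lt_trans (dtri c y z) _; rewrite -ltrBrDl.
Qed.

Lemma m_compact_bounded (c : X) (K : set X) : m_compact d K -> m_bounded d K.
Proof.
move=> Kc.
have cover : K `<=` \bigcup_(i : nat) [set y | d c y < i%:R].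
  move=> y _; have [k _ /(_ k (leqnn k)) cyk] := nbhs_infty_gtr (d c y).
  by exists k.
have [n [g Kcov]] := Kc nat _ (fun i => m_open_ball c i%:R) cover.
exists c, (\max_(j < n) g j)%:R => y /Kcov[k /= kn cy].
apply/ltW/(lt_le_trans cy); rewrite ler_nat.
exact: (@leq_bigmax _ (fun j : 'I_n => g j) (Ordinal kn)).
Qed.

Lemma hdist_ge0 (A B : set X) : A !=set0 -> (0 <= hdist d A B)%E.
Proof.
have [d0 _ _ _] := dm.
move=> [a Aa]; apply: le_trans (ereal_sup_ubound (ex_intro2 _ _ a Aa erefl)).
by apply: le_ereal_inf_tmp => _ [b _ <-]; rewrite lee_fin.
Qed.

Lemma hdist_le (A B : set X) (e : R) :
  (forall a, A a -> exists2 b, B b & d a b <= e) -> (hdist d A B <= e%:E)%E.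
Proof.
move=> near_B; apply: ge_ereal_sup => _ [a /near_B[b Bb ab] <-].
apply: le_trans (ereal_inf_lbound (ex_intro2 _ _ b Bb erefl)) _.
by rewrite lee_fin.
Qed.

Lemma hdist_lt {A B : set X} {e : R} {a : X} :
  (hdist d A B < e%:E)%E -> A a -> exists2 b, B b & d a b < e.
Proof.
move=> ABe Aa.
have /ereal_inf_lt[_ [b Bb <-]] :
    (ereal_inf [set (d a b)%:E | b in B] < e%:E)%E.
  by apply: le_lt_trans ABe; apply: ereal_sup_ubound; exists a.
by rewrite lte_fin; exists b.
Qed.

Lemma cvg_dist0P {T : Type} {F : set_system T} {FF : Filter F}
    (f : T -> X) (b : X) :
  d (f t) b @[t --> F] --> 0 <->
  forall e, 0 < e -> \forall t \near F, d (f t) b < e.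
Proof.
have [d0 _ _ _] := dm.
rewrite cvgr0Pnorm_lt; split=> small e /small; apply: filterS => t;
  by rewrite ger0_norm.
Qed.

Lemma family_through_seq (tn : nat -> R) (xn : nat -> X) (b : X) :
  d (xn n) b @[n --> \oo] --> 0 ->
  exists xt : R -> X, d (xt t) b @[t --> -oo] --> 0 /\
    forall n, exists2 m, tn m = tn n & xt (tn n) = xn m.
Proof.
have [_ deq _ _] := dm.
move=> /cvg_dist0P xn_b.
pose xt t :=
  if pselect (exists m, tn m = t) is left ex then xn (projT1 (cid ex)) else b.
exists xt; split=> [|n]; rewrite /xt.
  apply/cvg_dist0P => e e0; have [N _ xnN] := xn_b e e0.
  have : \forall t \near -oo, forall j : 'I_N, t < tn j.
    by apply: filter_forall => j; exact: nbhs_ninfty_lt (num_real _).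
  apply: filterS => t t_lt.
  case: pselect => [ex|_]; last by rewrite (deq b b).2.
  case: (cid ex) => m /= tm; apply: xnN; rewrite /= leqNgt; apply/negP => mN.
  by have := t_lt (Ordinal mN); rewrite /= tm ltxx.
case: pselect => [ex|]; last by case; exists n.
by case: (cid ex) => m /= tm; exists m.
Qed.

Lemma near_uniform_of_family_cvg (V : R -> X -> X) (b y : X) (c : R) :
  0 < c ->
  (forall xt : R -> X, d (xt t) b @[t --> -oo] --> 0 ->
     d (V t (xt t)) y @[t --> -oo] --> 0) ->
  exists2 r, 0 < r &
    \forall t \near -oo, forall x, d x b < r -> d (V t x) y < c.
Proof.
move=> c0 V_cvg; apply: contrapT => not_unif.
have bad n : exists tx : R * X,
    [/\ tx.1 < - n%:R, d tx.2 b < n.+1%:R^-1 & c <= d (V tx.1 tx.2) y].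
  apply: contrapT => no_bad; apply: not_unif; exists n.+1%:R^-1 => //.
  exists (- n%:R); split => [|t t_lt x xb]; first exact: num_real.
  by rewrite ltNge; apply/negP => cV; apply: no_bad; exists (t, x).
have [tx /all_and3[tn_lt xn_b V_bad]] := choice bad.
have [|xt [xt_b xt_tx]] :=
  family_through_seq (fun n => (tx n).1) (fun n => (tx n).2) b.
  apply/cvg_dist0P => e e0; near=> n; apply: lt_trans (xn_b n) _.
  by near: n; exact: (near_infty_natSinv_lt (PosNum e0)).
have /cvg_dist0P/(_ c c0)[M [_ V_near]] := V_cvg xt xt_b.
have [n _ /(_ n (leqnn n)) Mn] := nbhs_infty_gtr (- M).
have [m tmn xtn] := xt_tx n.
have tn_M : (tx n).1 < M by apply: lt_trans (tn_lt n) _; rewrite ltrNl.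
by have := V_near _ tn_M; rewrite xtn -tmn ltNge V_bad.
Unshelve. all: by end_near. Qed.

Lemma m_compact_near_cover {T : Type} {F : set_system T} {FF : Filter F}
    (K : set X) (Q : T -> X -> X -> Prop) :
  m_compact d K ->
  (forall b, K b -> exists2 r, 0 < r &
     \forall t \near F, forall x, d x b < r -> Q t x b) ->
  \forall t \near F, forall x, K x -> exists2 b, K b & Q t x b.
Proof.
have [_ deq dsym _] := dm.
move=> Kc unif.
have /choice[r rP] (b : {b | K b}) : exists r, 0 < r /\
    \forall t \near F, forall x, d x (sval b) < r -> Q t x (sval b).
  by case: b => b Kb; have [r r0 Qr] := unif b Kb; exists r.
have cover : K `<=` \bigcup_i [set x | d (sval i) x < r i].
  move=> x Kx; exists (exist _ x Kx) => //=.
  by rewrite (deq x x).2 //; case: (rP (exist _ x Kx)).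
have [n [g Kcov]] := Kc _ _ (fun i => m_open_ball (sval i) (r i)) cover.
have : \forall t \near F, forall j : 'I_n, forall x,
    d x (sval (g j)) < r (g j) -> Q t x (sval (g j)).
  by apply: filter_forall => j; case: (rP (g j)).
apply: filterS => t Qt x /Kcov[j /= jn xj].
exists (sval (g j)); first exact: svalP.
by apply: (Qt (Ordinal jn)); rewrite dsym.
Qed.

End MetricSpace.

Theorem theorem2p3 (R : realType) (X : Type) (d : X -> X -> R)
  (U : R -> R -> X -> X) (S : R -> X -> X)
  (A : R -> set X) (Aglob : set X) :
  is_metric d -> m_complete d ->
  is_process U -> is_pullback_attractor d U A ->
  is_semigroup S -> is_global_attractor d S Aglob ->
  (forall (xt : R -> X) (x0 : X),
     d (xt t) x0 @[t --> -oo] --> 0 ->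
     forall T : R, 0 < T ->
       d (U t (t - T) (xt t)) (S T x0) @[t --> -oo] --> 0) ->
  (exists K : set X, m_compact d K /\ forall t : R, t <= 0 -> A t `<=` K) ->
  hdist d (A t) Aglob @[t --> -oo] --> 0%E.
Proof.
move=> dm _ _ [A_ne A_inv _ _] _ [_ _ _ G_att] U_S [K [Kc A_K]].
have [_ _ _ dtri] := dm.
have [a0 A0a0] := (A_ne 0).1.
apply: cvge0_le => e e0; have e20 : 0 < e / 2 by rewrite divr_gt0.
have [T T0 SK_G] : exists2 T, 0 < T & (hdist d (S T @` K) Aglob < (e / 2)%:E)%E.
  have K_ne : K !=set0 by exists a0; exact: (A_K 0 (lexx 0)).
  have := G_att K K_ne (m_compact_bounded dm a0 _ Kc) _
    (nbhs_open_ereal_lt (f := fun=> e / 2) e20).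
  exact: pinfty_ex_gt0.
have U_near : \forall t \near -oo, forall x, K x ->
    exists2 b, K b & d (U t (t - T) x) (S T b) < e / 2.
  apply: (m_compact_near_cover dm) => // b _.
  apply: (near_uniform_of_family_cvg dm (fun t => U t (t - T))) => // xt xt_b.
  exact: U_S.
apply: filterS2 U_near (nbhs_ninfty_le (num_real 0)) => t Ut t0.
apply/andP; split; first exact: hdist_ge0 (A_ne t).1.
have tT : t - T <= t by rewrite lerBlDr lerDl ltW.
apply: hdist_le => a; rewrite -(A_inv t (t - T) tT) => -[x Ax <-].
have Kx : K x by apply: (A_K (t - T)) Ax; rewrite (le_trans tT).
have [b Kb Ux_b] := Ut x Kx.
have [z Gz b_z] := hdist_lt SK_G (ex_intro2 _ _ b Kb erefl).
exists z => //; apply: le_trans (dtri _ (S T b) _) _.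
by rewrite [e]splitr ltW // ltrD.
Qed.
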